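(* The Recursive Measure satisfies the added-YES-blocker postulate. For every SVG $\mathcal{G}=(N,\mathcal{W})$ and all $i,j\in N$ with $j$ not a dummy in $\mathcal{G}$: $$\frac{RM'^+_i(\mathcal{G})}{RM'^+_j(\mathcal{G})}=\frac{RM'^+_i(\mathcal{G}^Y)}{RM'^+_j(\mathcal{G}^Y)}.$$
   Context: A simple voting game (SVG) is a pair $\mathcal{G}=(N,\mathcal{W})$ with $N$ a nonempty finite set of players and $\mathcal{W}\subseteq 2^N$ monotone, $\emptyset\notin\mathcal{W}$, $N\in\mathcal{W}$. Divisions are identified with their YES-sets. Decisiveness and success: - Player $k$ is YES-decisive in $S$ if $k\in S\in\mathcal{W}$ and $S\setminus\{k\}\notin\mathcal{W}$. - Player $k$ is NO-decisive in $S$ if $k\notin S\notin\mathcal{W}$ and $S\cup\{k\}\in\mathcal{W}$. - A dummy is never decisive. - Player $k$ is successful in $S$ if ($k\in S\in\mathcal{W}$) or ($k\notin S\notin\mathcal{W}$). Loyal children: if $S\in\mathcal{W}$, they are the sets $S\setminus\{m\}\in\mathcal{W}$ with $m\in S$. If $S\notin\mathcal{W}$, they are the sets $S\cup\{m\}\notin\mathcal{W}$ with $m\notin S$. Recursive efficacy score $\alpha_k(S)$: - $\alpha_k(S)=1$ if $k$ is decisive; - $\alpha_k(S)=0$ if $k$ is not successful; - otherwise, the average of $\alpha_k$ over the loyal children. For a game with $m$ players, the a priori RM YES-power is $RM'^+_k=2^{-m}\sum_{S\ni k}\alpha_k(S)$. For a new player $0\notin N$, $\mathcal{G}^Y=(N\cup\{0\},\{S\cup\{0\}:S\in\mathcal{W}\})$.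 *)

From mathcomp Require Import all_boot all_order all_algebra.
Set Implicit Arguments. Unset Strict Implicit. Unset Printing Implicit Defensive.
Import Order.TTheory GRing.Theory Num.Theory.
Local Open Scope ring_scope.

Definition is_svg (T : finType) (W : {set {set T}}) : Prop :=
  [/\ (forall S U : {set T}, S \subset U -> S \in W -> U \in W),
      set0 \notin W & [set: T] \in W].

Section Game.
Variable T : finType.
Implicit Types (W : {set {set T}}) (S : {set T}) (k : T).

Definition yes_decisive W k S : bool :=
  [&& k \in S, S \in W & S :\ k \notin W].
Definition no_decisive W k S : bool :=
  [&& k \notin S, S \notin W & S :|: [set k] \in W].
Definition decisive W k S : bool := yes_decisive W k S || no_decisive W k S.

Definition dummy W k : Prop :=
  forall S, (S :|: [set k] \in W) = (S :\ k \in W).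

Definition successful W k S : bool :=
  ((k \in S) && (S \in W)) || ((k \notin S) && (S \notin W)).

Definition loyal_children W S : {set {set T}} :=
  if S \in W then [set S :\ m | m in S & S :\ m \in W]
  else [set S :|: [set m] | m in ~: S & S :|: [set m] \notin W].

(* Recursive efficacy score, computed with fuel; fuel #|T|.+1 is always
   sufficient in an SVG (winning chains shrink, losing chains grow). *)
Fixpoint alpha_fuel (n : nat) W k S : rat :=
  match n with
  | 0 => 0
  | n'.+1 =>
    if decisive W k S then 1
    else if ~~ successful W k S then 0
    else (\sum_(C in loyal_children W S) alpha_fuel n' W k C)
           / #|loyal_children W S|%:R
  end.

Definition alpha W k S : rat := alpha_fuel #|T|.+1 W k S.

Definition RMyes W k : rat :=
  (\sum_(S : {set T} | k \in S) alpha W k S) / (2 ^+ #|T|).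

End Game.

(* The game G^Y with a new player 0 = None added to every winning coalition. *)
Definition addYES (T : finType) (W : {set {set T}}) : {set {set option T}} :=
  [set ((Some @: S) :|: [set None]) | S : {set T} in W].

From mathcomp Require Import all_boot all_order all_algebra.
Set Implicit Arguments. Unset Strict Implicit. Unset Printing Implicit Defensive.
Import GRing.Theory.
Local Open Scope ring_scope.

(* The coalitions of G^Y containing the blocker 0 are exactly the S + {0},
   and such a coalition is winning, decisive for k, successful for k, or a
   loyal child exactly when S is in G; so the efficacy scores of S and
   S + {0} agree.  A coalition without 0 is losing in G^Y, hence every YES
   voter in it is unsuccessful and scores 0.  Thus RM'^+ in G^Y is RM'^+ in
   G divided by 2 (twice as many divisions, same total score), and the
   common factor cancels in the ratio.  The hypotheses on G only serve, in
   the paper, to make the ratios well defined; here x / 0 = 0 on both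
   sides. *)

Section Fuel.
Variable T : finType.
Implicit Types (W : {set {set T}}) (S : {set T}).

(* Each step to a loyal child shrinks a winning coalition or grows a losing
   one, so this bounds the recursion depth of alpha. *)
Definition loyal_depth W S : nat := if S \in W then #|S| else #|~: S|.

Lemma loyal_depth_children W S C :
  C \in loyal_children W S -> (loyal_depth W C < loyal_depth W S)%N.
Proof.
rewrite /loyal_children /loyal_depth; case: ifP => SW.
  case/imsetP=> m; rewrite inE => /andP[mS CW] ->.
  by rewrite CW (cardsD1 m S) mS.
case/imsetP=> m; rewrite inE => /andP[mS CW] ->.
by rewrite (negbTE CW) setCU -setDE (cardsD1 m (~: S)) mS.
Qed.

Lemma alpha_fuelS W k n S : (loyal_depth W S < n)%N ->
  alpha_fuel n.+1 W k S = alpha_fuel n W k S.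
Proof.
elim: n S => [|n IH] S //= lt_depth.
case: (decisive W k S) => //; case: (~~ successful W k S) => //.
congr (_ / _); apply: eq_bigr => C childC; apply: IH.
exact: leq_trans (loyal_depth_children childC) lt_depth.
Qed.

Lemma alpha_fuel_alpha W k S : alpha_fuel #|T|.+2 W k S = alpha W k S.
Proof.
by rewrite alpha_fuelS // ltnS /loyal_depth; case: ifP => _; apply: max_card.
Qed.

End Fuel.

Section AddYesBlocker.
Variable T : finType.
Implicit Types (W : {set {set T}}) (S : {set T}) (U : {set option T}) (k : T).

Definition add_blocker S : {set option T} := (Some @: S) :|: [set None].
Definition drop_blocker U : {set T} := [set x | Some x \in U].

Lemma mem_add_blocker S x : (Some x \in add_blocker S) = (x \in S).
Proof. by rewrite !inE (mem_imset _ _ (@Some_inj _)) orbF. Qed.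

Lemma blocker_in_add_blocker S : None \in add_blocker S.
Proof. by rewrite !inE eqxx orbT. Qed.

Lemma add_blockerK : cancel add_blocker drop_blocker.
Proof. by move=> S; apply/setP=> x; rewrite inE mem_add_blocker. Qed.

Lemma add_blocker_inj : injective add_blocker.
Proof. exact: can_inj add_blockerK. Qed.

Lemma drop_blockerK U : None \in U -> add_blocker (drop_blocker U) = U.
Proof.
move=> NU; apply/setP=> [[x|]]; first by rewrite mem_add_blocker inE.
by rewrite blocker_in_add_blocker NU.
Qed.

Lemma blocker_in_addYES W U : U \in addYES W -> None \in U.
Proof. by case/imsetP=> S _ ->; apply: blocker_in_add_blocker. Qed.

Lemma add_blocker_addYES W S : (add_blocker S \in addYES W) = (S \in W).
Proof. exact: (mem_imset _ _ add_blocker_inj). Qed.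

Lemma add_blockerD1 S k : add_blocker S :\ Some k = add_blocker (S :\ k).
Proof.
apply/setP=> [[x|]]; rewrite in_setD1 ?blocker_in_add_blocker //.
by rewrite !mem_add_blocker (inj_eq (@Some_inj _)) in_setD1.
Qed.

Lemma add_blockerU1 S k :
  add_blocker S :|: [set Some k] = add_blocker (S :|: [set k]).
Proof.
apply/setP=> [[x|]]; rewrite in_setU in_set1 ?blocker_in_add_blocker //.
by rewrite !mem_add_blocker (inj_eq (@Some_inj _)) in_setU in_set1.
Qed.

Lemma decisive_addYES W k S :
  decisive (addYES W) (Some k) (add_blocker S) = decisive W k S.
Proof.
rewrite /decisive /yes_decisive /no_decisive mem_add_blocker.
by rewrite add_blockerD1 add_blockerU1 !add_blocker_addYES.
Qed.

Lemma successful_addYES W k S :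
  successful (addYES W) (Some k) (add_blocker S) = successful W k S.
Proof. by rewrite /successful mem_add_blocker add_blocker_addYES. Qed.

Lemma loyal_children_addYES W S :
  loyal_children (addYES W) (add_blocker S) =
  add_blocker @: loyal_children W S.
Proof.
rewrite /loyal_children add_blocker_addYES.
case: ifP => SW; rewrite -imset_comp; apply/setP=> U; apply/imsetP/imsetP.
- case=> [[m|]]; rewrite in_set => /andP[mS CW] ->; last first.
    by move: (blocker_in_addYES CW); rewrite !inE eqxx.
  exists m; last by rewrite /= add_blockerD1.
  by rewrite in_set -mem_add_blocker mS -add_blocker_addYES -add_blockerD1.
- case=> m; rewrite in_set => /andP[mS CW] ->; exists (Some m) => /=.
    by rewrite in_set mem_add_blocker mS add_blockerD1 add_blocker_addYES.
  by rewrite add_blockerD1.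
- case=> [[m|]]; rewrite in_set => /andP[mS CW] ->; last first.
    by move: mS; rewrite in_setC blocker_in_add_blocker.
  exists m; last by rewrite /= add_blockerU1.
  move: mS; rewrite in_set !in_setC mem_add_blocker => -> /=.
  by rewrite -add_blocker_addYES -add_blockerU1.
- case=> m; rewrite in_set => /andP[mS CW] ->; exists (Some m) => /=.
    by rewrite in_set in_setC mem_add_blocker -in_setC mS add_blockerU1 add_blocker_addYES.
  by rewrite add_blockerU1.
Qed.

Lemma alpha_fuel_addYES W k n S :
  alpha_fuel n (addYES W) (Some k) (add_blocker S) = alpha_fuel n W k S.
Proof.
elim: n S => [|n IH] S //=.
rewrite decisive_addYES successful_addYES loyal_children_addYES.
case: (decisive W k S) => //; case: (~~ successful W k S) => //.
rewrite (card_imset _ add_blocker_inj) big_imset /=; last first.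
  by move=> ? ? _ _; apply: add_blocker_inj.
by congr (_ / _); apply: eq_bigr => C _; apply: IH.
Qed.

Lemma alpha_fuel_addYES_unblocked W k n U :
  Some k \in U -> None \notin U -> alpha_fuel n (addYES W) (Some k) U = 0.
Proof.
move=> kU NU; case: n => [|n] //=.
have UW : U \notin addYES W by apply: contra NU; apply: blocker_in_addYES.
by rewrite /decisive /yes_decisive /no_decisive /successful kU (negbTE UW).
Qed.

Lemma alpha_addYES W k S :
  alpha (addYES W) (Some k) (add_blocker S) = alpha W k S.
Proof. by rewrite /alpha card_option alpha_fuel_addYES alpha_fuel_alpha. Qed.

Lemma sum_alpha_addYES W k :
  \sum_(U : {set option T} | Some k \in U) alpha (addYES W) (Some k) U =
  \sum_(S : {set T} | k \in S) alpha W k S.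
Proof.
rewrite (bigID (fun U : {set option T} => None \in U)) /= [X in _ + X]big1 ?addr0; last first.
  by move=> U /andP[kU NU]; apply: alpha_fuel_addYES_unblocked.
rewrite (reindex_onto add_blocker drop_blocker); last first.
  by move=> U /andP[_ NU]; apply: drop_blockerK.
apply: eq_big => [S | S _].
  by rewrite mem_add_blocker blocker_in_add_blocker add_blockerK eqxx !andbT.
exact: alpha_addYES.
Qed.

Lemma RMyes_addYES W k : RMyes (addYES W) (Some k) = RMyes W k / 2.
Proof.
by rewrite /RMyes sum_alpha_addYES card_option exprS invfM mulrA mulrAC.
Qed.

End AddYesBlocker.

Theorem lemma3 (T : finType) (W : {set {set T}}) (i j : T) :
  is_svg W -> ~ dummy W j ->
  RMyes W i / RMyes W j = RMyes (addYES W) (Some i) / RMyes (addYES W) (Some j).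
Proof.
by move=> _ _; rewrite !RMyes_addYES [in RHS]invf_div [in RHS]mulrA divfK.
Qed.
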